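(* Let $m,n\ge 3$ be integers. If either ($m\not\equiv 0 \pmod 4$ and $n\neq 4$) or ($n\not\equiv 0\pmod 4$ and $m\neq 4$), then the direct product $C_m\times C_n$ is not a distance magic graph.
   Context: All graphs are finite and simple; $C_n$ denotes the cycle on $n$ vertices. For a graph $G$ and vertex $x$, $N(x)$ is the (open) neighborhood of $x$. A distance magic labeling of a graph $G$ of order $N$ is a bijection $\ell\colon V(G)\to\{1,\dots,N\}$ for which there is a constant $k$ such that $\sum_{y\in N(x)}\ell(y)=k$ for every $x\in V(G)$; $G$ is distance magic if it admits such a labeling. The direct product $G\times H$ has vertex set $V(G)\times V(H)$, with $(g,h)$ adjacent to $(g',h')$ iff $gg'\in E(G)$ and $hh'\in E(H)$. *)

From mathcomp Require Import all_boot.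
Set Implicit Arguments. Unset Strict Implicit. Unset Printing Implicit Defensive.

Definition cycle_adj (n : nat) : rel 'I_n :=
  fun i j => (j == (i.+1 %% n) :> nat) || (i == (j.+1 %% n) :> nat).

Definition direct_prod (T U : finType) (e : rel T) (f : rel U) : rel (T * U) :=
  fun x y => e x.1 y.1 && f x.2 y.2.

Definition nbhd (T : finType) (e : rel T) (x : T) : {set T} := [set y | e x y].

Definition distance_magic_labeling (T : finType) (e : rel T) (l : T -> nat) : Prop :=
  injective l /\ (forall x, 1 <= l x <= #|T|) /\
  exists k, forall x, \sum_(y in nbhd e x) l y = k.

Definition distance_magic (T : finType) (e : rel T) : Prop :=
  exists l : T -> nat, distance_magic_labeling e l.
Arguments cycle_adj n : clear implicits.

From mathcomp Require Import all_boot.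
From mathcomp Require Import zify.

Set Implicit Arguments.
Unset Strict Implicit.
Unset Printing Implicit Defensive.

(* Write (x, y) for a vertex of C_m x C_n and x+1, x-1 for the
   cyclic successor and predecessor.  The neighbourhood of (x, y) is
   {x+1, x-1} x {y+1, y-1}, so a distance magic labeling l with constant k
   satisfies  g(x+1, y) + g(x-1, y) = k,  where  g(a, y) = l(a, y+1) + l(a, y-1).
   A function f on C_m whose "neighbour sums" f(x+1) + f(x-1) are constant is
   4-periodic; if moreover 4 does not divide m it is 2-periodic, hence
   2 f(x) = k for every x.  Applied to g(., y) this gives that every row sum
   g(a, y) equals k/2, independently of y, so each row l(a, .) again has
   constant neighbour sums and is therefore 4-periodic on C_n.  For n >= 3,
   n <> 4, the shift by 4 moves every vertex of C_n, which contradicts the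
   injectivity of l. *)

Section Cycles.
Variable n : nat.

Lemma iter_ordS_val t (x : 'I_n) : val (iter t (@ordS n) x) = (x + t) %% n.
Proof.
elim: t => [|t IH] /=; first by rewrite addn0 modn_small.
by rewrite IH -addn1 modnDml -addnA addn1.
Qed.

Lemma iter_ordS_mod s t (x : 'I_n) : s = t %[mod n] ->
  iter s (@ordS n) x = iter t (@ordS n) x.
Proof. by move=> e; apply: val_inj; rewrite !iter_ordS_val -modnDmr e modnDmr. Qed.

Lemma iter_ordS_fixed t (x : 'I_n) : (iter t (@ordS n) x == x) = (n %| t).
Proof.
rewrite -val_eqE iter_ordS_val /= -{2}(modn_small (ltn_ord x)) -{2}[val x]addn0.
by rewrite eqn_modDl mod0n.
Qed.

Lemma ordS_neq_ord_pred (x : 'I_n) : 2 < n -> ordS x != ord_pred x.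
Proof.
move=> n_gt2; apply: contraTneq n_gt2 => eq_Sx_Px.
have : iter 2 (@ordS n) x == x by rewrite /= eq_Sx_Px ord_predK.
by rewrite iter_ordS_fixed -leqNgt => /dvdn_leq; apply.
Qed.

Lemma nbhd_cycle (x : 'I_n) : nbhd (cycle_adj n) x = [set ordS x; ord_pred x].
Proof.
apply/setP => y; rewrite !inE /cycle_adj; congr orb.
apply/eqP/eqP => [Sy_x|->]; last by rewrite -[RHS]/(val (ordS (ord_pred x))) ord_predK.
by rewrite -[y]ordSK; congr ord_pred; apply: val_inj.
Qed.

Lemma sum_nbhd_cycle (f : 'I_n -> nat) (x : 'I_n) : 2 < n ->
  \sum_(y in nbhd (cycle_adj n) x) f y = f (ordS x) + f (ord_pred x).
Proof.
move=> n_gt2; rewrite nbhd_cycle big_setU1 ?big_set1 //.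
by rewrite inE ordS_neq_ord_pred.
Qed.

End Cycles.

Lemma sum_nbhd_direct_prod (T U : finType) (e : rel T) (f : rel U)
    (l : T * U -> nat) (x : T) (y : U) :
  \sum_(p in nbhd (direct_prod e f) (x, y)) l p =
  \sum_(a in nbhd e x) \sum_(b in nbhd f y) l (a, b).
Proof.
rewrite pair_big; apply: eq_big => [[a b]|[a b] _] //.
by rewrite !inE.
Qed.

Lemma two_mod_mul4 n : ~~ (4 %| n) -> exists q, 2 = 4 * q %[mod n].
Proof.
move=> n_4; suff [q [s e]] : exists q s, 4 * q = 2 + s * n.
  by exists q; rewrite e addnC modnMDl.
have := divn_eq n 4; have : n %% 4 < 4 by rewrite ltn_mod.
move: n_4; rewrite /dvdn; set d := n %/ 4; set r := n %% 4 => r_neq0 r_lt4 n_eq.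
have [r1|[r2|r3]] : r = 1 \/ r = 2 \/ r = 3 by lia.
- by exists (2 * d + 1), 2; lia.
- by exists (d + 1), 1; lia.
- by exists (2 * d + 2), 2; lia.
Qed.

Section ConstantNeighbourSums.
Variables (n : nat) (f : 'I_n -> nat) (k : nat).

Hypothesis f_nbsum : forall x, f (ordS x) + f (ord_pred x) = k.

Lemma nbsum_shift2 x : f (iter 2 (@ordS n) x) + f x = k.
Proof. by have := f_nbsum (ordS x); rewrite ordSK. Qed.

Lemma nbsum_period4 x : f (iter 4 (@ordS n) x) = f x.
Proof.
have : f (iter 4 (@ordS n) x) + f (iter 2 (@ordS n) x) = k.
  exact: nbsum_shift2 (iter 2 (@ordS n) x).
by have := nbsum_shift2 x; lia.
Qed.

(* If 4 does not divide n, the shift by 2 is a multiple of the shift by 4,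
   so f even has period 2 and thus takes the value k/2 everywhere. *)
Lemma nbsum_half x : ~~ (4 %| n) -> f x + f x = k.
Proof.
move=> n_4; have [q two_4q] := two_mod_mul4 n_4.
have period4q y : f (iter (4 * q) (@ordS n) y) = f y.
  by elim: q {two_4q} => [|q IH] //; rewrite mulnS iterD nbsum_period4.
by have := nbsum_shift2 x; rewrite (iter_ordS_mod _ two_4q) period4q.
Qed.

End ConstantNeighbourSums.

Lemma shift4_no_fixpoint n (y : 'I_n) : 2 < n -> n != 4 ->
  iter 4 (@ordS n) y != y.
Proof.
move=> n_gt2 n_neq4; rewrite iter_ordS_fixed; apply: contra n_neq4 => n_dvd4.
have n_le4 := dvdn_leq (isT : 0 < 4) n_dvd4.
have /orP[/eqP n_eq3|//] : (n == 3) || (n == 4) by lia.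
by rewrite n_eq3 in n_dvd4.
Qed.

Definition torus_nbsum m n (F : 'I_m -> 'I_n -> nat) (k : nat) : Prop :=
  forall x y, F (ordS x) (ordS y) + F (ordS x) (ord_pred y)
            + F (ord_pred x) (ordS y) + F (ord_pred x) (ord_pred y) = k.

(* If 4 does not divide m, every row F a of such a labeling is 4-periodic:
   the row sums g(a, y) = F a (y+1) + F a (y-1) have constant neighbour sums
   in a, hence equal k/2, so each row has constant neighbour sums in y. *)
Lemma torus_rows_period4 m n (F : 'I_m -> 'I_n -> nat) k :
  ~~ (4 %| m) -> torus_nbsum F k -> forall a y, F a (iter 4 (@ordS n) y) = F a y.
Proof.
move=> m_4 F_nbsum a y.
pose g b z := F b (ordS z) + F b (ord_pred z).
have g_half b z : g b z + g b z = k.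
  by apply: (nbsum_half (f := g^~ z)) => // x; rewrite /g -(F_nbsum x z); lia.
apply: (nbsum_period4 (k := g a y)) => z.
by have := g_half a z; have := g_half a y; rewrite /g; lia.
Qed.

Lemma torus_nbsum_rows_not_injective m n (F : 'I_m -> 'I_n -> nat) k :
  ~~ (4 %| m) -> 2 < n -> n != 4 -> torus_nbsum F k ->
  ~ (forall a, injective (F a)).
Proof.
move=> m_4 n_gt2 n_neq4 F_nbsum F_inj.
have m_gt0 : 0 < m by case: m m_4 F F_nbsum F_inj.
have n_gt0 : 0 < n by apply: ltn_trans n_gt2.
pose a := Ordinal m_gt0; pose y := Ordinal n_gt0.
have /F_inj/eqP := torus_rows_period4 m_4 F_nbsum a y.
by rewrite (negbTE (shift4_no_fixpoint y n_gt2 n_neq4)).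
Qed.

Theorem mainTheorem9 (m n : nat) (hm : 3 <= m) (hn : 3 <= n) :
  ((m %% 4 != 0) && (n != 4)) || ((n %% 4 != 0) && (m != 4)) ->
  ~ distance_magic (direct_prod (cycle_adj m) (cycle_adj n)).
Proof.
move=> hyp [l [l_inj [_ [k l_sum]]]].
have l_nbsum : torus_nbsum (fun a b => l (a, b)) k.
  move=> x y; rewrite -(l_sum (x, y)) sum_nbhd_direct_prod sum_nbhd_cycle //.
  by rewrite !sum_nbhd_cycle // addnA.
case/orP: hyp => /andP [m_4 n_neq4].
- apply: (torus_nbsum_rows_not_injective m_4 hn n_neq4 l_nbsum).
  by move=> a b b' /l_inj [].
- have l_nbsum' : torus_nbsum (fun b a => l (a, b)) k.
    by move=> y x; rewrite -(l_nbsum x y); lia.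
  apply: (torus_nbsum_rows_not_injective m_4 hm n_neq4 l_nbsum').
  by move=> b a a' /l_inj [].
Qed.
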